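(* Let $E$ be a Dedekind complete Riesz space with conditional expectation operator $T$ and let $e$ be a weak order unit of $E$ with $Te=e$. If $(f_\alpha)_{\alpha\in\Lambda}$ is a $T$-uniform family in $E$, then the set $\{T|f_\alpha| : \alpha\in\Lambda\}$ is order bounded in $E$.
   Context: A conditional expectation operator on a Dedekind complete Riesz space $E$ with a weak order unit is a positive, order continuous linear projection $T:E\to E$ which maps weak order units to weak order units and whose range $\mathcal{R}(T)$ is a Dedekind complete Riesz subspace of $E$. For $u\in E$, $P_u$ denotes the band projection onto the band generated by $u$. A family $(f_\alpha)_{\alpha\in\Lambda}$ in $E$ is called $T$-uniform if $\sup\{T P_{(|f_\alpha|-ce)^+}|f_\alpha| : \alpha\in\Lambda\}$ (exists for all sufficiently large $c$ and) order converges to $0$ as $c\to\infty$. *)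

From HB Require Import structures.
From mathcomp Require Import all_boot all_order all_algebra.
From mathcomp Require Import reals.
From Stdlib Require Import ClassicalEpsilon.
Set Implicit Arguments. Unset Strict Implicit. Unset Printing Implicit Defensive.
Import Order.TTheory GRing.Theory Num.Theory.
Local Open Scope ring_scope.

Section Riesz.
Variables (R : realType) (E : lmodType R) (le : E -> E -> Prop).

Definition is_ub (A : E -> Prop) (u : E) := forall x, A x -> le x u.
Definition is_lb (A : E -> Prop) (u : E) := forall x, A x -> le u x.
Definition is_lub (A : E -> Prop) (s : E) :=
  is_ub A s /\ forall u, is_ub A u -> le s u.
Definition is_glb (A : E -> Prop) (s : E) :=
  is_lb A s /\ forall u, is_lb A u -> le u s.

Record riesz_space : Prop := {
  rs_refl : forall x, le x x;
  rs_anti : forall x y, le x y -> le y x -> x = y;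
  rs_trans : forall x y z, le x y -> le y z -> le x z;
  rs_add : forall x y z, le x y -> le (x + z) (y + z);
  rs_scale : forall (a : R) x y, 0 <= a -> le x y -> le (a *: x) (a *: y);
  rs_sup2 : forall x y, exists s, is_lub (fun z => z = x \/ z = y) s
}.

Definition dedekind_complete : Prop :=
  forall A : E -> Prop, (exists x, A x) -> (exists u, is_ub A u) ->
  exists s, is_lub A s.

(* chosen supremum / infimum (meaningful when they exist) *)
Definition lsup (A : E -> Prop) : E := epsilon (inhabits 0) (is_lub A).
Definition linf (A : E -> Prop) : E := epsilon (inhabits 0) (is_glb A).

Definition rmax (x y : E) : E := lsup (fun z => z = x \/ z = y).
Definition rmin (x y : E) : E := linf (fun z => z = x \/ z = y).
Definition rabs (x : E) : E := rmax x (- x).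
Definition rpos (x : E) : E := rmax x 0.

Definition disjoint (x y : E) : Prop := rmin (rabs x) (rabs y) = 0.

Definition disj_comp (u : E) (x : E) : Prop := disjoint x u.
Definition band_gen (u : E) (x : E) : Prop :=
  forall y, disj_comp u y -> disjoint x y.

(* P_u : band projection onto the band generated by u
   (E = {u}^dd (+) {u}^d in a Dedekind complete Riesz space) *)
Definition band_proj (u x : E) : E :=
  epsilon (inhabits 0) (fun p => band_gen u p /\ disj_comp u (x - p)).

Definition weak_order_unit (w : E) : Prop :=
  le 0 w /\ forall x, band_gen w x.

Definition directed (I : Type) (r : I -> I -> Prop) : Prop :=
  inhabited I /\ (forall i, r i i) /\ (forall i j k, r i j -> r j k -> r i k) /\
  (forall i j, exists k, r i k /\ r j k).

Definition oconv (I : Type) (r : I -> I -> Prop) (x : I -> E) (l : E) : Prop :=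
  exists p : I -> E,
    (forall i j, r i j -> le (p j) (p i)) /\
    is_glb (fun z => exists i, z = p i) 0 /\
    exists i0, forall i, r i0 i -> le (rabs (x i - l)) (p i).

Definition order_continuous (T : E -> E) : Prop :=
  forall (I : Type) (r : I -> I -> Prop), directed r ->
  forall x : I -> E, oconv r x 0 -> oconv r (fun i => T (x i)) 0.

Definition riesz_subspace (S : E -> Prop) : Prop :=
  S 0 /\ (forall x y, S x -> S y -> S (x + y)) /\
  (forall (a : R) x, S x -> S (a *: x)) /\
  (forall x y, S x -> S y -> S (rmax x y)).

Definition dedekind_complete_in (S : E -> Prop) : Prop :=
  forall A : E -> Prop, (forall x, A x -> S x) -> (exists x, A x) ->
  (exists u, S u /\ is_ub A u) ->
  exists s, S s /\ is_ub A s /\ (forall u, S u -> is_ub A u -> le s u).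

Definition range (T : E -> E) (y : E) : Prop := exists x, y = T x.

Definition cond_exp_op (T : {linear E -> E}) : Prop :=
  (forall x, le 0 x -> le 0 (T x)) /\
  order_continuous T /\
  (forall x, T (T x) = T x) /\
  (forall w, weak_order_unit w -> weak_order_unit (T w)) /\
  riesz_subspace (range T) /\ dedekind_complete_in (range T).

Definition tu_set (T : E -> E) (e : E) (L : Type) (f : L -> E) (c : R) : E -> Prop :=
  fun z => exists a, z = T (band_proj (rpos (rabs (f a) - c *: e)) (rabs (f a))).

Definition T_uniform (T : E -> E) (e : E) (L : Type) (f : L -> E) : Prop :=
  exists c0 : R,
    (forall c, c0 <= c -> exists s, is_lub (tu_set T e f c) s) /\
    oconv (fun a b : R => a <= b) (fun c => lsup (tu_set T e f c)) 0.

Definition order_bounded (A : E -> Prop) : Prop :=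
  exists a b, forall x, A x -> le a x /\ le x b.

End Riesz.

From Pilot Require Import Defs.
From mathcomp Require Import all_boot all_order all_algebra.
From mathcomp Require Import reals.
From Stdlib Require Import ClassicalEpsilon.
Set Implicit Arguments. Unset Strict Implicit. Unset Printing Implicit Defensive.
Import Order.TTheory GRing.Theory Num.Theory.
Local Open Scope ring_scope.

(* Fix c >= 0 past the threshold of T-uniformity and let s be the supremum
   of the T P_{(|f_a| - ce)^+} |f_a|.  For g = |f_a| and u = (g - ce)^+,
   split g = P_u g + (g - P_u g).  The first summand contributes at most s
   after applying T.  The second is disjoint from u, which forces it below ce;
   hence its image under T is at most T (ce) = ce.  So 0 <= T |f_a| <= s + ce
   for all a.  As [band_proj] is defined by choice, the band decomposition has
   to be shown to exist: in a Dedekind complete space, P_u g = sup_n (g /\ n u)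
   for g, u >= 0. *)

Section RieszSpaceTheory.
Variables (R : realType) (E : lmodType R) (le : E -> E -> Prop).
Hypothesis hE : riesz_space le.

Lemma le_add2r z x y : le (x + z) (y + z) <-> le x y.
Proof.
split=> [h|]; last exact: (rs_add hE).
by have := rs_add hE (- z) h; rewrite !addrK.
Qed.

Lemma le_add2l z x y : le (z + x) (z + y) <-> le x y.
Proof. by rewrite ![z + _]addrC le_add2r. Qed.

Lemma le_add a b c d : le a b -> le c d -> le (a + c) (b + d).
Proof.
move=> hab hcd; apply: (rs_trans hE (rs_add hE c hab)).
by rewrite le_add2l.
Qed.

Lemma le_sub_ge0 x y : le 0 (y - x) <-> le x y.
Proof. by rewrite -(le_add2r x) add0r subrK. Qed.

Lemma le_addr x c : le 0 c -> le x (x + c).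
Proof. by move=> hc; rewrite -[X in le X _]addr0 le_add2l. Qed.

Lemma le_subr_addr x y z : le x (y - z) <-> le (x + z) y.
Proof. by rewrite -(le_add2r z) subrK. Qed.

Lemma le_subl_addr x y z : le (x - z) y <-> le x (y + z).
Proof. by rewrite -(le_add2r z) subrK. Qed.

Lemma le_subr x c : le 0 c -> le (x - c) x.
Proof. by rewrite le_subl_addr; apply: le_addr. Qed.

Lemma le_opp2 x y : le x y -> le (- y) (- x).
Proof. by move=> h; rewrite -(le_add2r (x + y)) addKr addrCA addNr addr0. Qed.

Lemma rmax_lub x y : is_lub le (fun z => z = x \/ z = y) (rmax le x y).
Proof. by apply: epsilon_spec; apply: rs_sup2. Qed.

Lemma le_rmaxl x y : le x (rmax le x y).
Proof. by apply: (rmax_lub x y).1; left. Qed.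

Lemma le_rmaxr x y : le y (rmax le x y).
Proof. by apply: (rmax_lub x y).1; right. Qed.

Lemma rmax_le x y z : le x z -> le y z -> le (rmax le x y) z.
Proof. by move=> hx hy; apply: (rmax_lub x y).2 => w [->|->]. Qed.

Lemma rmin_glb x y : is_glb le (fun z => z = x \/ z = y) (rmin le x y).
Proof.
apply: epsilon_spec; exists (- rmax le (- x) (- y)); split.
  by move=> w [->|->]; rewrite -[w in le _ w]opprK; apply: le_opp2;
    [apply: le_rmaxl | apply: le_rmaxr].
move=> z hz; rewrite -[z]opprK; apply: le_opp2.
by apply: rmax_le; apply: le_opp2; apply: hz; [left | right].
Qed.

Lemma rmin_lel x y : le (rmin le x y) x.
Proof. by apply: (rmin_glb x y).1; left. Qed.

Lemma rmin_ler x y : le (rmin le x y) y.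
Proof. by apply: (rmin_glb x y).1; right. Qed.

Lemma le_rmin x y z : le z x -> le z y -> le z (rmin le x y).
Proof. by move=> hx hy; apply: (rmin_glb x y).2 => w [->|->]. Qed.

Lemma rminC x y : rmin le x y = rmin le y x.
Proof.
by apply: (rs_anti hE); apply: le_rmin; [apply: rmin_ler | apply: rmin_lel
  | apply: rmin_ler | apply: rmin_lel].
Qed.

Lemma rmin_ge0 x y : le 0 x -> le 0 y -> le 0 (rmin le x y).
Proof. exact: le_rmin. Qed.

Lemma rminEmax x y : rmin le x y = x + y - rmax le x y.
Proof.
apply: (rs_anti hE).
- rewrite le_subr_addr addrC -le_subr_addr.
  apply: rmax_le; rewrite le_subr_addr; first exact/le_add2l/rmin_ler.
  by rewrite [x + y]addrC; apply/le_add2l/rmin_lel.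
- apply: le_rmin; rewrite le_subl_addr; first exact/le_add2l/le_rmaxr.
  by rewrite [x + y]addrC; apply/le_add2l/le_rmaxl.
Qed.

Lemma le_rabs x : le x (rabs le x). Proof. exact: le_rmaxl. Qed.

Lemma le_rabsN x : le (- x) (rabs le x). Proof. exact: le_rmaxr. Qed.

Lemma rabs_ge0 x : le 0 (rabs le x).
Proof.
have h2 : (0 : R) <= 2^-1 by rewrite invr_ge0 ler0n.
have := rs_scale hE h2 (le_add (le_rabs x) (le_rabsN x)).
by rewrite subrr scaler0 -mulr2n -scaler_nat scalerA mulVf ?pnatr_eq0 // scale1r.
Qed.

Lemma ger0_rabs x : le 0 x -> rabs le x = x.
Proof.
move=> hx; apply: (rs_anti hE); last exact: le_rabs.
apply: rmax_le; first exact: rs_refl.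
by apply: (rs_trans hE _ hx); rewrite -oppr0; apply: le_opp2.
Qed.

Lemma le_rpos x : le x (rpos le x). Proof. exact: le_rmaxl. Qed.

Lemma rpos_ge0 x : le 0 (rpos le x). Proof. exact: le_rmaxr. Qed.

Lemma rpos_mono x y : le x y -> le (rpos le x) (rpos le y).
Proof.
move=> hxy; apply: rmax_le; last exact: rpos_ge0.
exact: (rs_trans hE hxy (le_rpos y)).
Qed.

Lemma rpos_le_rabs x : le (rpos le x) (rabs le x).
Proof. by apply: rmax_le; [apply: le_rabs | apply: rabs_ge0]. Qed.

Lemma rmin_addr_le a b c : le 0 c -> le (rmin le a (b + c)) (rmin le a b + c).
Proof.
move=> hc; rewrite -le_subl_addr; apply: le_rmin.
  exact: (rs_trans hE (le_subr _ hc) (rmin_lel _ _)).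
by rewrite le_subl_addr; apply: rmin_ler.
Qed.

Lemma rmin_addr_subadd a b c : le 0 a -> le 0 b -> le 0 c ->
  le (rmin le a (b + c)) (rmin le a b + rmin le a c).
Proof.
move=> ha hb hc; apply: (rs_trans hE (y := rmin le a (c + rmin le a b))).
  by apply: le_rmin; [apply: rmin_lel | rewrite [c + _]addrC; apply: rmin_addr_le].
by rewrite [X in le _ X]addrC; apply: rmin_addr_le; apply: rmin_ge0.
Qed.

Lemma rmax_disjoint a b : rmin le a b = 0 -> rmax le a b = a + b.
Proof. by move=> hab; apply/esym/eqP; rewrite -subr_eq0 -rminEmax hab. Qed.

Lemma mulrn_ge0 u n : le 0 u -> le 0 (u *+ n).
Proof.
move=> hu; elim: n => [|n IHn]; first exact: rs_refl.
by rewrite mulrSr -[0]addr0; apply: le_add.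
Qed.

Lemma rmin_mulrn_eq0 a u n : le 0 a -> le 0 u -> rmin le a u = 0 ->
  rmin le a (u *+ n) = 0.
Proof.
move=> ha hu hau; elim: n => [|n IHn].
  by apply: (rs_anti hE); [apply: rmin_ler | apply: rmin_ge0 => //; apply: rs_refl].
apply: (rs_anti hE); last by apply: rmin_ge0 => //; apply: mulrn_ge0.
rewrite mulrSr -(addr0 0) -{1}IHn -hau.
by apply: rmin_addr_subadd => //; apply: mulrn_ge0.
Qed.

Lemma rmin_lub_eq0 (A : E -> Prop) a s : le 0 a -> le 0 s -> is_lub le A s ->
  (forall x, A x -> rmin le a x = 0) -> rmin le a s = 0.
Proof.
(* a \/ x = a + x for x disjoint from a, so a + s <= a \/ s. *)
move=> ha hs [hsA hsl] hA.
have hs_shift : le s (rmax le a s - a).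
  apply: hsl => x hx; rewrite le_subr_addr addrC -rmax_disjoint ?hA //.
  by apply: rmax_le; [apply: le_rmaxl | apply: (rs_trans hE (hsA x hx) (le_rmaxr _ _))].
apply: (rs_anti hE); last exact: rmin_ge0.
by rewrite rminEmax le_subl_addr add0r addrC -le_subr_addr.
Qed.

Definition band_approx (g u : E) (z : E) : Prop :=
  exists n, z = rmin le g (u *+ n).

Section BandApproxLub.
Variables (g u s : E).
Hypotheses (hg : le 0 g) (hu : le 0 u) (hs : is_lub le (band_approx g u) s).

Lemma band_approx_ge0 z : band_approx g u z -> le 0 z.
Proof. by move=> [n ->]; apply: rmin_ge0 => //; apply: mulrn_ge0. Qed.

Lemma band_approx_lub_ge0 : le 0 s.
Proof.
have h0 : band_approx g u (rmin le g (u *+ 0)) by exists 0%N.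
exact: (rs_trans hE (band_approx_ge0 h0) (hs.1 _ h0)).
Qed.

Lemma band_approx_lub_le : le s g.
Proof. by apply: hs.2 => z [n ->]; apply: rmin_lel. Qed.

Lemma band_gen_band_approx_lub : band_gen le u s.
Proof.
move=> y; rewrite /disj_comp /Defs.disjoint.
rewrite (ger0_rabs hu) (ger0_rabs band_approx_lub_ge0).
move=> hy; rewrite rminC; apply: (rmin_lub_eq0 (rabs_ge0 y) band_approx_lub_ge0 hs).
move=> z hz; apply: (rs_anti hE); last exact: rmin_ge0 (rabs_ge0 y) (band_approx_ge0 hz).
case: hz => n ->; rewrite -(rmin_mulrn_eq0 n (rabs_ge0 y) hu hy).
by apply: le_rmin; [apply: rmin_lel | apply: (rs_trans hE (rmin_ler _ _) (rmin_ler _ _))].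
Qed.

Lemma disj_comp_band_approx_lub : disj_comp le u (g - s).
Proof.
have hgs : le 0 (g - s) by rewrite le_sub_ge0; apply: band_approx_lub_le.
rewrite /disj_comp /Defs.disjoint (ger0_rabs hu) (ger0_rabs hgs).
set w := rmin le (g - s) u.
(* adding w to the n-th approximant stays below the next one, so s + w <= s *)
have hstep n : le (rmin le g (u *+ n) + w) (rmin le g (u *+ n.+1)).
  apply: le_rmin; last by rewrite mulrSr; apply: le_add; apply: rmin_ler.
  rewrite -[X in le _ X](subrKC s g); apply: le_add; last exact: rmin_lel.
  by apply: hs.1; exists n.
have hsw : le s (s - w).
  apply: hs.2 => z [n ->]; rewrite le_subr_addr.
  by apply: (rs_trans hE (hstep n)); apply: hs.1; exists n.+1.
apply: (rs_anti hE); last exact: rmin_ge0.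
by move: hsw; rewrite le_subr_addr -{2}[s]addr0 le_add2l.
Qed.

End BandApproxLub.

Lemma band_projP g u : dedekind_complete le -> le 0 g -> le 0 u ->
  band_gen le u (band_proj le u g) /\ disj_comp le u (g - band_proj le u g).
Proof.
move=> hDC hg hu; have [s hs] : exists s, is_lub le (band_approx g u) s.
  apply: hDC; first by exists (rmin le g (u *+ 0)), 0%N.
  by exists g => z [n ->]; apply: rmin_lel.
apply: (epsilon_spec _ (fun p => band_gen le u p /\ disj_comp le u (g - p))).
exists s; split.
  exact: band_gen_band_approx_lub hs.
exact: disj_comp_band_approx_lub hs.
Qed.

Lemma band_part_ge0 g u p : le 0 g -> band_gen le u p -> disj_comp le u (g - p) ->
  le 0 p.
Proof.
move=> hg hp hgp.
have hnp : le (rpos le (- p)) 0.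
  rewrite -(hp _ hgp); apply: le_rmin.
    by apply: rmax_le; [apply: le_rabsN | apply: rabs_ge0].
  apply: (rs_trans hE _ (rpos_le_rabs _)); apply: rpos_mono.
  by rewrite -[X in le X _]add0r; apply: (rs_add hE).
by rewrite -oppr0 -[p]opprK; apply: le_opp2; apply: (rs_trans hE (le_rpos _) hnp).
Qed.

Lemma band_compl_le g k p : le 0 g -> le 0 k ->
  band_gen le (rpos le (g - k)) p -> disj_comp le (rpos le (g - k)) (g - p) ->
  le (g - p) k.
Proof.
move=> hg hk hp hgp; have p_ge0 := band_part_ge0 hg hp hgp.
have hgpk : le (rpos le (g - p - k)) 0.
  rewrite -hgp; apply: le_rmin.
    apply: (rs_trans hE _ (rpos_le_rabs _)); apply: rpos_mono; exact: le_subr.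
  apply: (rs_trans hE _ (le_rabs _)); apply: rpos_mono; apply: (rs_add hE (- k)).
  exact: le_subr.
by rewrite -[k]add0r -le_subl_addr; apply: (rs_trans hE (le_rpos _) hgpk).
Qed.

Lemma linear_pos_le (T : {linear E -> E}) x y :
  (forall z, le 0 z -> le 0 (T z)) -> le x y -> le (T x) (T y).
Proof. by move=> hT /le_sub_ge0 hxy; apply/le_sub_ge0; rewrite -linearB; apply: hT. Qed.

End RieszSpaceTheory.

Lemma T_rabs_le_tu_set_ub (R : realType) (E : lmodType R) (le : E -> E -> Prop)
  (T : {linear E -> E}) (e : E) (L : Type) (f : L -> E) (c : R) (s : E) :
  riesz_space le -> dedekind_complete le -> (forall z, le 0 z -> le 0 (T z)) ->
  le 0 e -> T e = e -> 0 <= c -> is_ub le (tu_set le T e f c) s ->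
  forall a, le (T (rabs le (f a))) (s + c *: e).
Proof.
move=> hE hDC hT he hTe hc hs a.
set g := rabs le (f a); set u := rpos le (g - c *: e).
have hce : le 0 (c *: e) by rewrite -(scaler0 _ c); apply: rs_scale.
have [hp hgp] := band_projP hE hDC (rabs_ge0 hE (f a)) (rpos_ge0 hE (g - c *: e)).
rewrite -(subrKC (band_proj le u g) g) linearD; apply: (le_add hE).
  by apply: hs; exists a.
have -> : c *: e = T (c *: e) by rewrite linearZ hTe.
apply: (linear_pos_le hE) => //.
exact: band_compl_le (rabs_ge0 hE _) hce hp hgp.
Qed.

Theorem lemma2p7 (R : realType) (E : lmodType R) (le : E -> E -> Prop)
  (hE : riesz_space le) (hDC : dedekind_complete le)
  (T : {linear E -> E}) (hT : cond_exp_op le T)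
  (e : E) (he : weak_order_unit le e) (hTe : T e = e)
  (L : Type) (f : L -> E) (hf : T_uniform le T e f) :
  order_bounded le (fun z => exists a, z = T (rabs le (f a))).
Proof.
have [c0 [hlub _]] := hf; have [hTpos _] := hT.
pose c := Num.max c0 0.
have [hc0 hc] : c0 <= c /\ 0 <= c by rewrite !le_max !lexx orbT.
have [s [hs _]] := hlub c hc0.
exists 0, (s + c *: e) => _ [a ->]; split.
  by rewrite -(linear0 T); apply: (linear_pos_le hE) => //; apply: rabs_ge0.
exact: T_rabs_le_tu_set_ub hE hDC hTpos he.1 hTe hc hs a.
Qed.
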